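(* Let $n\ge 2$ and let $C_n=\{a_0<a_1<\cdots<a_{n-1}\}$ be a chain with $a_0=0$, $a_{n-1}=1$, with $\wedge=\min$ and $\vee=\max$. Let $\to$ be a binary operation on $C_n$. Then $\langle C_n,\vee,\wedge,\to,0,1\rangle$ is a semi-Heyting algebra if and only if all of the following hold: (i) $\{a_1,\dots,a_{n-1}\}$ is closed under $\to$ and $\langle\{a_1,\dots,a_{n-1}\},\vee,\wedge,\to,a_1,1\rangle$ is a semi-Heyting algebra; (ii) $0\to 0=1$; (iii) $a_i\to 0=0$ for all $1\le i\le n-1$; (iv) there exists $j\in\{0,1,\dots,n-1\}$ such that $0\to a_h=a_j$ for every $h$ with $j<h\le n-1$, and $0\to a_h\ge a_h$ for every $h$ with $1\le h\le j$. Consequently, for a fixed semi-Heyting operation on $\{a_1,\dots,a_{n-1}\}$, the number of ways to extend it to a semi-Heyting operation on $C_n$ equals $\sum_{i=0}^{n-1}\frac{(n-1)!}{i!}$.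
   Context: A semi-Heyting algebra is an algebra $\langle L,\vee,\wedge,\to,0,1\rangle$ such that: (SH1) $\langle L,\vee,\wedge,0,1\rangle$ is a bounded lattice with least element $0$ and greatest element $1$; (SH2) $x\wedge(x\to y)=x\wedge y$; (SH3) $x\wedge(y\to z)=x\wedge[(x\wedge y)\to(x\wedge z)]$; (SH4) $x\to x=1$, for all $x,y,z\in L$. *)

From mathcomp Require Import all_boot.
Set Implicit Arguments. Unset Strict Implicit. Unset Printing Implicit Defensive.

(* The chain C_n = {a_0 < ... < a_{n-1}} is modelled as 'I_n, with a_k the
   ordinal of value k; the order is the natural order on values. *)
Definition elt (n : nat) (hn : 1 < n) (k : nat) : 'I_n :=
  Ordinal (ltn_pmod k (ltnW hn)).

Definition mn n (x y : 'I_n) : 'I_n := if (x <= y)%N then x else y.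
Definition mx n (x y : 'I_n) : 'I_n := if (x <= y)%N then y else x.

(* <S, max, min, imp, b, t> is a semi-Heyting algebra, where S is a subset of
   the chain 'I_n (automatically closed under min/max) with least element b
   and greatest element t.  (SH1) lattice part, closure of S under imp,
   (SH2), (SH3), (SH4). *)
Definition SH_on n (S : pred 'I_n) (b t : 'I_n) (imp : 'I_n -> 'I_n -> 'I_n) : bool :=
  [&& S b, S t, [forall x, S x ==> (b <= x <= t)%N],
   [forall x, forall y, S x && S y ==> S (imp x y)],
   [forall x, forall y, S x && S y ==> (mn x (imp x y) == mn x y)],
   [forall x, forall y, forall z, [&& S x, S y & S z] ==>
        (mn x (imp y z) == mn x (imp (mn x y) (mn x z)))] &
   [forall x, S x ==> (imp x x == t)]].

Definition pos_part n : pred 'I_n := fun x => (0 < x)%N.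

From mathcomp Require Import all_boot zify.

Set Implicit Arguments. Unset Strict Implicit. Unset Printing Implicit Defensive.

(* Taking x = k and y = 0 in (SH3) shows that the row c h := 0 -> a_h is
   "trace stable": min(a_k, c a_h) = min(a_k, c a_k) whenever k <= h.  On a
   chain this forces c to dominate the identity up to some threshold a_j and
   to be constantly a_j above it; conversely, such a row together with
   0 -> 0 = 1 and a_i -> 0 = 0 is all that (SH2)-(SH4) require beyond the
   positive part.  For a fixed positive part an extension is therefore a
   threshold j together with a value c a_h in [a_h, 1] for each 1 <= h <= j,
   i.e. (n-1)(n-2)...(n-j) = (n-1)!/(n-1-j)! choices. *)

Lemma mnE n (x y : 'I_n) : (mn x y : nat) = minn x y.
Proof. by rewrite /mn /minn; do 2 case: ifP => //; lia. Qed.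

Record SH_axioms n (S : pred 'I_n) (b t : 'I_n) (imp : 'I_n -> 'I_n -> 'I_n) : Prop := {
  SH_bot : S b;
  SH_top : S t;
  SH_bounds : forall x, S x -> b <= x <= t;
  SH_closed : forall x y, S x -> S y -> S (imp x y);
  SH_meet_imp : forall x y, S x -> S y -> minn x (imp x y) = minn x y;
  SH_meet_imp_rel : forall x y z, S x -> S y -> S z ->
    minn x (imp y z) = minn x (imp (mn x y) (mn x z));
  SH_imp_refl : forall x, S x -> imp x x = t }.

Lemma SH_onP n (S : pred 'I_n) (b t : 'I_n) (imp : 'I_n -> 'I_n -> 'I_n) :
  reflect (SH_axioms S b t imp) (SH_on S b t imp).
Proof.
apply: (iffP idP).
  case/and5P=> Sb St /forallP Hbt /forallP Hcl /and3P[/forallP H2 /forallP H3 /forallP H4].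
  split=> // [x Sx | x y Sx Sy | x y Sx Sy | x y z Sx Sy Sz | x Sx].
  - by have /implyP := Hbt x; apply.
  - by have /forallP/(_ y)/implyP := Hcl x; apply; rewrite Sx.
  - have /forallP/(_ y)/implyP/(_ (introT andP (conj Sx Sy)))/eqP := H2 x.
    by move/(congr1 val); rewrite /= !mnE.
  - have /forallP/(_ y)/forallP/(_ z)/implyP := H3 x.
    by rewrite Sx Sy Sz => /(_ isT)/eqP/(congr1 val); rewrite /= !mnE.
  - by have /implyP/(_ Sx)/eqP := H4 x.
case=> Sb St Hbt Hcl H2 H3 H4; apply/and5P; split=> //; last (apply/and3P; split).
- by apply/forallP=> x; apply/implyP; apply: Hbt.
- by apply/forallP=> x; apply/forallP=> y; apply/implyP=> /andP[]; apply: Hcl.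
- apply/forallP=> x; apply/forallP=> y; apply/implyP=> /andP[Sx Sy].
  by rewrite -val_eqE /= !mnE H2.
- apply/forallP=> x; apply/forallP=> y; apply/forallP=> z.
  by apply/implyP=> /and3P[Sx Sy Sz]; rewrite -val_eqE /= !mnE H3.
- by apply/forallP=> x; apply/implyP=> Sx; rewrite H4.
Qed.

Section Threshold.
Variable n : nat.
Implicit Types (c : 'I_n -> 'I_n) (j : 'I_n).

Definition trace_stable c := forall k h : 'I_n, k <= h -> minn k (c h) = minn k (c k).

Definition threshold c j :=
  (forall h : 'I_n, j < h -> c h = j) /\ (forall h : 'I_n, 1 <= h <= j -> h <= c h).

Lemma threshold_trace_stable c j : threshold c j -> trace_stable c.
Proof.
case=> Cabove Cbelow k h kh; have [->|k_gt0] := posnP k; first by rewrite !min0n.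
have [hj|jh] := leqP h j.
  have := Cbelow h; have := Cbelow k; rewrite k_gt0 hj; lia.
have [kj|jk] := leqP k j; last by rewrite !Cabove.
have := Cbelow k; rewrite (Cabove h jh) k_gt0 kj; lia.
Qed.

Lemma trace_stable_threshold c : 0 < n -> trace_stable c -> exists j, threshold c j.
Proof.
move=> n_gt0 Cst; pose dom (h : 'I_n) := h <= c h.
have dom0 : dom (Ordinal n_gt0) by [].
have [j dom_j jmax] := arg_maxnP (fun h : 'I_n => nat_of_ord h) dom0.
rewrite /dom in dom_j jmax.
exists j; split=> [h jh | h /andP[_ hj]]; last by have := Cst h j hj; lia.
have cjh : j <= c h by have := Cst j h (ltnW jh); lia.
have chh : c h < h by rewrite ltnNge; apply/negP=> /jmax; lia.
have chj : c h <= j by apply: jmax; have := Cst (c h) h (ltnW chh); lia.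
by apply/eqP; rewrite -val_eqE eqn_leq chj cjh.
Qed.

Lemma threshold_uniq c j j' : threshold c j -> threshold c j' -> j = j'.
Proof.
wlog jj' : j j' / j <= j'.
  by move=> wlog_uniq Tj Tj'; case: (leqP j j') => [|/ltnW] le;
    [apply: wlog_uniq | symmetry; apply: wlog_uniq].
move=> [Cj _] [_ Cj']; apply/eqP; rewrite -val_eqE /= eqn_leq jj' leqNgt.
by apply/negP=> jj'_lt; have := Cj' j'; rewrite (Cj j' jj'_lt); lia.
Qed.

End Threshold.

Lemma eq_SH_on n (S : pred 'I_n) (b t : 'I_n) (f g : 'I_n -> 'I_n -> 'I_n) :
  (forall x y, S x -> S y -> f x y = g x y) -> SH_on S b t f = SH_on S b t g.
Proof.
have mn_in x y : S x -> S y -> S (mn x y) by rewrite /mn; case: ifP.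
wlog suff: f g / (forall x y, S x -> S y -> f x y = g x y) -> SH_on S b t f -> SH_on S b t g.
  move=> impl fg; apply/idP/idP; apply: impl => // x y Sx Sy; exact/esym/fg.
move=> fg /SH_onP[Sb St Sbt Scl S2 S3 S4]; apply/SH_onP; split=> //.
- by move=> x y Sx Sy; rewrite -fg ?Scl.
- by move=> x y Sx Sy; rewrite -fg ?S2.
- by move=> x y z Sx Sy Sz; rewrite -(fg y z) // -fg ?mn_in // S3.
- by move=> x Sx; rewrite -fg ?S4.
Qed.

Lemma card_exists_uniq (I T : finType) (F : I -> pred T) :
  (forall i i' x, x \in F i -> x \in F i' -> i = i') ->
  #|[pred x | [exists i, x \in F i]]| = \sum_i #|F i|.
Proof.
move=> F_disj; rewrite -sum1_card.
rewrite (eq_bigr (fun x => \sum_(i | x \in F i) 1)) => [|x /existsP[i Fi]]; last first.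
  rewrite (bigD1 i) //= big1 // => i' /andP[Fi' ne].
  by case/eqP: ne; exact: F_disj Fi' Fi.
rewrite (exchange_big_dep xpredT) //=; apply: eq_bigr => i _.
rewrite -sum1_card; apply: eq_bigl => x.
by apply/andP/idP => [[] | Fi] //; split=> //; rewrite inE; apply/existsP; exists i.
Qed.

Lemma card_family_prod (T rT : finType) (F : T -> pred rT) :
  #|family F| = \prod_x #|F x|.
Proof. by rewrite card_family foldrE big_map big_enum. Qed.

Lemma card_ord_geq n (y : 'I_n) : #|[pred v : 'I_n | y <= v]| = n - y.
Proof.
rewrite -sum1_card -(big_mkord (fun v => y <= v) (fun _ => 1)).
rewrite (@big_cat_nat _ _ _ y) ?(ltnW (ltn_ord y)) //=.
rewrite big_nat_cond big1 ?add0n => [|i /andP[/andP[_ iy] yi]]; last by lia.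
rewrite big_nat_cond (eq_bigl (fun i => (y <= i < n) && true)) => [|i]; last by lia.
by rewrite -big_nat_cond sum_nat_const_nat muln1.
Qed.

Lemma prod_ffact_interval n j : j < n ->
  \prod_(y < n) (if 0 < y <= j then n - y else 1) = (n.-1) ^_ j.
Proof.
elim: j => [_|j IH j_lt]; first by rewrite ffactn0 big1 // => y _; case: ifP => //; lia.
rewrite ffactnSr -IH; last lia.
rewrite (eq_bigr (fun y : 'I_n => (if 0 < y <= j then n - y else 1) *
     (if (y : nat) == j.+1 then n - y else 1))) => [|y _]; last first.
  have [->|ne] := eqVneq (y : nat) j.+1; first by rewrite leqnn ltnn andbF mul1n.
  rewrite muln1; congr (if _ then _ else _).
  by apply/idP/idP => /andP[y_gt0 yj]; apply/andP; split=> //; move/eqP: ne; lia.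
rewrite big_split /=; congr (_ * _).
rewrite (bigD1 (Ordinal j_lt)) //= eqxx big1 ?muln1 => [|y ne]; first lia.
by case: eqP => // y_eq; case/eqP: ne; apply: val_inj.
Qed.

Lemma sum_ffact_factd n : 0 < n -> \sum_(j < n) (n.-1) ^_ j = \sum_(i < n) (n.-1)`! %/ i`!.
Proof.
move=> n_gt0; rewrite (reindex_inj rev_ord_inj) /=; apply: eq_bigr => i _.
by rewrite ffact_factd; [congr (_ %/ _`!) | ]; have := ltn_ord i; lia.
Qed.

Section Chain.
Variables (n : nat) (hn : 1 < n).
Local Notation a0 := (elt hn 0).
Local Notation a1 := (elt hn 1).
Local Notation atop := (elt hn n.-1).

Lemma val_a0 : (a0 : nat) = 0.
Proof. by rewrite /= mod0n. Qed.

Lemma val_a1 : (a1 : nat) = 1.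
Proof. by rewrite /= modn_small. Qed.

Lemma val_atop : (atop : nat) = n.-1.
Proof. by rewrite /= modn_small //; lia. Qed.

Lemma val_eq0_a0 (x : 'I_n) : (x : nat) = 0 -> x = a0.
Proof. by move=> x0; apply: ord_inj; rewrite /= mod0n. Qed.

Lemma mn_a0 (x : 'I_n) : mn x a0 = a0.
Proof. by apply: ord_inj; rewrite /= mnE /= mod0n minn0. Qed.

Lemma SH_chain_restrict imp : SH_on predT a0 atop imp ->
  [/\ SH_on (pos_part (n:=n)) a1 atop imp, imp a0 a0 = atop,
      (forall i : 'I_n, 1 <= i -> imp i a0 = a0) &
      exists j, threshold (imp a0) j].
Proof.
case/SH_onP=> _ _ _ _ H2 H3 H4.
have imp_x0 (x : 'I_n) : 0 < x -> imp x a0 = a0.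
  by move=> x_gt0; apply: ord_inj; have := H2 x a0 isT isT; rewrite val_a0; lia.
split=> //; last first.
- apply: trace_stable_threshold (ltnW hn) _ => k h kh; rewrite (H3 k a0 h) // mn_a0.
  by congr (minn _ (imp _ _)); apply: ord_inj; rewrite /= mnE; lia.
- exact: H4.
apply/SH_onP; split=> [||x x_gt0|x y x_gt0 y_gt0|x y _ _|x y z _ _ _|x _].
- by rewrite /pos_part val_a1.
- by rewrite /pos_part val_atop; lia.
- by rewrite val_a1 val_atop; have := ltn_ord x; move: x_gt0; rewrite /pos_part; lia.
- by move: x_gt0 y_gt0; rewrite /pos_part; have := H2 x y isT isT; lia.
- exact: H2.
- exact: H3.
- exact: H4.
Qed.

Lemma SH_chain_extend imp :
  SH_on (pos_part (n:=n)) a1 atop imp -> imp a0 a0 = atop ->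
  (forall i : 'I_n, 1 <= i -> imp i a0 = a0) -> (exists j, threshold (imp a0) j) ->
  SH_on predT a0 atop imp.
Proof.
case/SH_onP=> _ _ _ _ P2 P3 P4 imp00 imp_x0 [j /threshold_trace_stable row0].
apply/SH_onP; split=> // [x _ | x y _ _ | x y z _ _ _ | x _].
- by rewrite val_a0 val_atop; have := ltn_ord x; lia.
- have [x0|x_gt0] := posnP x; first by rewrite x0 !min0n.
  have [/val_eq0_a0 ->|y_gt0] := posnP y; first by rewrite imp_x0.
  exact: P2.
- have [x0|x_gt0] := posnP x; first by rewrite x0 !min0n.
  have [/val_eq0_a0 ->|y_gt0] := posnP y; rewrite ?mn_a0.
    have [/val_eq0_a0 ->|_] := posnP z; first by rewrite mn_a0.
    have [zx|xz] := leqP z x.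
      by have -> : mn x z = z by apply: ord_inj; rewrite /= mnE; lia.
    have -> : mn x z = x by apply: ord_inj; rewrite /= mnE; lia.
    exact: row0 (ltnW xz).
  have [/val_eq0_a0 ->|z_gt0] := posnP z.
    by rewrite mn_a0 !imp_x0 ?mnE; lia.
  by apply: P3; rewrite /pos_part ?mnE; lia.
- have [/val_eq0_a0 ->|x_gt0] := posnP x; first exact: imp00.
  exact: P4.
Qed.

Variable g : 'I_n -> 'I_n -> 'I_n.
Hypothesis g_SH : SH_on (pos_part (n:=n)) a1 atop g.

(* The admissible values, at each pair of arguments, of an extension of [g]
   whose row [0 -> _] has threshold [j]. *)
Definition ext_values (j : 'I_n) (p : 'I_n * 'I_n) : pred 'I_n :=
  if (0 < p.1) && (0 < p.2) then pred1 (g p.1 p.2)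
  else if 0 < p.1 then pred1 a0
  else if 0 < p.2 then (if p.2 <= j then [pred v : 'I_n | p.2 <= v] else pred1 j)
  else pred1 atop.

Lemma card_ext_values j p :
  #|ext_values j p| = if (p.1 == 0 :> nat) && (0 < p.2 <= j) then n - p.2 else 1.
Proof.
case: p => x y; rewrite /ext_values /=.
case: (posnP x) => [x0|x_gt0]; case: (posnP y) => [y0|y_gt0];
  rewrite ?x0 ?y0 ?x_gt0 ?y_gt0 /= ?card1 ?gtn_eqF //.
by case: ifP => _; rewrite ?card1 ?card_ord_geq.
Qed.

Lemma card_family_ext_values j : #|family (ext_values j)| = (n.-1) ^_ j.
Proof.
rewrite card_family_prod (eq_bigr _ (fun p _ => card_ext_values j p)).
rewrite -(pair_bigA _ (fun x y : 'I_n =>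
  if (x == 0 :> nat) && (0 < y <= j) then n - y else 1)) (bigD1 a0) //=.
rewrite [X in _ * X]big1 ?muln1 => [|x x_ne0]; last first.
  apply: big1 => y _; suff -> : (x == 0 :> nat) = false by [].
  by apply: contraNF x_ne0 => /eqP/val_eq0_a0 ->.
by rewrite -(prod_ffact_interval (ltn_ord j)) mod0n.
Qed.

Lemma family_ext_values_threshold j (f : {ffun 'I_n * 'I_n -> 'I_n}) :
  f \in family (ext_values j) -> threshold (fun h => f (a0, h)) j.
Proof.
move=> /familyP f_ext; split=> [h jh | h /andP[h_gt0 hj]].
  have := f_ext (a0, h); rewrite /ext_values /= mod0n /=.
  by rewrite (leq_ltn_trans (leq0n j) jh) leqNgt jh inE => /eqP.
by have := f_ext (a0, h); rewrite /ext_values /= mod0n /= h_gt0 hj.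
Qed.

Lemma SH_extensionE (f : {ffun 'I_n * 'I_n -> 'I_n}) :
  SH_on predT a0 atop (fun x y => f (x, y)) &&
  [forall x : 'I_n, forall y : 'I_n, (0 < x) && (0 < y) ==> (f (x, y) == g x y)]
  = [exists j, f \in family (ext_values j)].
Proof.
apply/andP/existsP => [[/SH_chain_restrict[_ f00 f_x0 [j row0]] /forallP f_pos]
                     | [j f_ext]].
  exists j; apply/familyP => -[x y]; rewrite /ext_values /=.
  case: (posnP x) => [/val_eq0_a0 ->|x_gt0]; case: (posnP y) => [/val_eq0_a0 ->|y_gt0];
    rewrite ?mod0n ?x_gt0 ?y_gt0 /= ?inE.
  - by rewrite f00.
  - case: ifP => yj; first by case: row0 => _; apply; rewrite y_gt0 yj.
    by rewrite inE (proj1 row0 y) // ltnNge yj.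
  - exact/eqP/f_x0.
  - by have /forallP/(_ y) := f_pos x; rewrite x_gt0 y_gt0.
have f_pos (x y : 'I_n) : 0 < x -> 0 < y -> f (x, y) = g x y.
  move=> x_gt0 y_gt0; move/familyP/(_ (x, y)): f_ext.
  by rewrite /ext_values /= x_gt0 y_gt0 inE => /eqP.
split; last first.
  by apply/forallP=> x; apply/forallP=> y; apply/implyP=> /andP[x_gt0 y_gt0]; rewrite f_pos.
apply: SH_chain_extend.
- by rewrite (@eq_SH_on _ _ _ _ _ g) // => x y; apply: f_pos.
- by move/familyP/(_ (a0, a0)): f_ext; rewrite /ext_values /= mod0n inE => /eqP.
- move=> i i_gt0; move/familyP/(_ (i, a0)): f_ext.
  by rewrite /ext_values /= mod0n i_gt0 inE => /eqP.
- by exists j; apply: family_ext_values_threshold.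
Qed.

Lemma card_SH_extensions :
  #|[pred f : {ffun 'I_n * 'I_n -> 'I_n} |
      SH_on predT a0 atop (fun x y => f (x, y)) &&
      [forall x : 'I_n, forall y : 'I_n, (0 < x) && (0 < y) ==> (f (x, y) == g x y)]]|
  = \sum_(j < n) (n.-1) ^_ j.
Proof.
rewrite (eq_card (B := [pred f | [exists j, f \in family (ext_values j)]])); last first.
  by move=> f; rewrite !inE SH_extensionE.
rewrite card_exists_uniq => [|j j' f /family_ext_values_threshold Tj
                                   /family_ext_values_threshold Tj'].
  by apply: eq_bigr => j _; apply: card_family_ext_values.
exact: threshold_uniq Tj Tj'.
Qed.

End Chain.

Theorem mainTheorem2 (n : nat) (hn : 1 < n) :
  (forall imp : 'I_n -> 'I_n -> 'I_n,
    SH_on predT (elt hn 0) (elt hn n.-1) imp <->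
    [/\ SH_on (pos_part (n:=n)) (elt hn 1) (elt hn n.-1) imp,
        imp (elt hn 0) (elt hn 0) = elt hn n.-1,
        (forall i : 'I_n, 1 <= i -> imp i (elt hn 0) = elt hn 0) &
        (exists j : 'I_n,
           (forall h : 'I_n, j < h -> imp (elt hn 0) h = j) /\
           (forall h : 'I_n, 1 <= h <= j -> h <= imp (elt hn 0) h))])
  /\
  (forall g : 'I_n -> 'I_n -> 'I_n,
    SH_on (pos_part (n:=n)) (elt hn 1) (elt hn n.-1) g ->
    #|[pred f : {ffun 'I_n * 'I_n -> 'I_n} |
        SH_on predT (elt hn 0) (elt hn n.-1) (fun x y => f (x, y)) &&
        [forall x : 'I_n, forall y : 'I_n, (0 < x) && (0 < y) ==> (f (x, y) == g x y)]]|
    = \sum_(i < n) (n.-1)`! %/ i`!).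
Proof.
split=> [imp | g g_SH].
  split; first exact: SH_chain_restrict.
  by case=> ? ? ? ?; apply: SH_chain_extend.
by rewrite (card_SH_extensions g_SH) (sum_ffact_factd (ltnW hn)).
Qed.
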